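(* Let $C$ be a set. The weight $w:\mathrm{SList}(C)\to(\mathrm{B}\overline{\mathrm{A}_\infty})^{\mathrm{op}}$ is faithful; that is, two morphisms $f,g:L\to L'$ of symmetric lists are equal if and only if $w(f)=w(g)$ in $\overline{\mathrm{A}_\infty}$.
   Context: $\mathrm{SList}(C)$ is the category presented as follows: objects are finite lists of elements of $C$; morphisms are generated by $\mathrm{sw}_{a,b,l}:a::b::l\to b::a::l$ and, for $f:l\to l'$ and $x\in C$, $x::_mf:x::l\to x::l'$; relations: $x::_m-$ is functorial, $\mathrm{sw}_{a,b,l}$ is natural in $l$, $\mathrm{sw}_{b,a,l}\circ\mathrm{sw}_{a,b,l}=\mathrm{Id}$, and $\mathrm{sw}_{b,c,a::l}\circ(b::_m\mathrm{sw}_{a,c,l})\circ\mathrm{sw}_{a,b,c::l}=(c::_m\mathrm{sw}_{a,b,l})\circ\mathrm{sw}_{a,c,b::l}\circ(a::_m\mathrm{sw}_{b,c,l})$. $\overline{\mathrm{A}_\infty}$ is the Coxeter group with generators $(s_i)_{i\in\mathbb{N}}$, relations $s_i^2=e$, $(s_is_{i+1})^3=e$, $(s_is_j)^2=e$ for $|i-j|>1$; $\mathrm{B}G$ is the one-object category with endomorphisms $G$. The weight $w$ is the functor $\mathrm{SList}(C)\to(\mathrm{B}\overline{\mathrm{A}_\infty})^{\mathrm{op}}$ determined by $w(\mathrm{sw}_{a,b,l})=s_0$ and $w(x::_mf)=\sigma(w(f))$, where $\sigma$ is the shift endomorphism $s_i\mapsto s_{i+1}$ (equivalently, induced from the free-monoid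 labelling $\mathrm{sw}\mapsto 0$, $x::_mf\mapsto 1+(\text{label of }f)$ letterwise). *)

From Stdlib Require Import List.
Import ListNotations.
Set Implicit Arguments.

Section SList.
Variable C : Type.

Inductive shom : list C -> list C -> Type :=
| sid : forall l, shom l l
| scomp : forall l1 l2 l3, shom l2 l3 -> shom l1 l2 -> shom l1 l3
| ssw : forall (a b : C) (l : list C), shom (a :: b :: l) (b :: a :: l)
| scons : forall (x : C) (l l' : list C), shom l l' -> shom (x :: l) (x :: l').

Arguments sid : clear implicits.
Arguments ssw : clear implicits.

Inductive sheq : forall l l' : list C, shom l l' -> shom l l' -> Prop :=
| sheq_refl : forall l l' (f : shom l l'), sheq f f
| sheq_sym : forall l l' (f g : shom l l'), sheq f g -> sheq g f
| sheq_trans : forall l l' (f g h : shom l l'), sheq f g -> sheq g h -> sheq f h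
| sheq_comp : forall l1 l2 l3 (g g' : shom l2 l3) (f f' : shom l1 l2),
    sheq g g' -> sheq f f' -> sheq (scomp g f) (scomp g' f')
| sheq_cons : forall x l l' (f f' : shom l l'),
    sheq f f' -> sheq (scons x f) (scons x f')
| sheq_idl : forall l l' (f : shom l l'), sheq (scomp (sid l') f) f
| sheq_idr : forall l l' (f : shom l l'), sheq (scomp f (sid l)) f
| sheq_assoc : forall l1 l2 l3 l4 (h : shom l3 l4) (g : shom l2 l3) (f : shom l1 l2),
    sheq (scomp h (scomp g f)) (scomp (scomp h g) f)
| sheq_cons_id : forall x l, sheq (scons x (sid l)) (sid (x :: l))
| sheq_cons_comp : forall x l1 l2 l3 (g : shom l2 l3) (f : shom l1 l2),
    sheq (scons x (scomp g f)) (scomp (scons x g) (scons x f))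
| sheq_sw_nat : forall a b l l' (f : shom l l'),
    sheq (scomp (ssw a b l') (scons a (scons b f)))
         (scomp (scons b (scons a f)) (ssw a b l))
| sheq_sw_inv : forall a b l,
    sheq (scomp (ssw b a l) (ssw a b l)) (sid (a :: b :: l))
| sheq_yb : forall a b c l,
    sheq (scomp (ssw b c (a :: l)) (scomp (scons b (ssw a c l)) (ssw a b (c :: l))))
         (scomp (scons c (ssw a b l)) (scomp (ssw a c (b :: l)) (scons a (ssw b c l)))).

(** * The weight, on the level of words in the generators s_i (encoded by i).
    Composition in (B G)^op reverses the order: w (g ∘ f) = w f · w g. *)
Fixpoint weight l l' (f : shom l l') : list nat :=
  match f with
  | sid _ => []
  | scomp g f => weight f ++ weight g
  | ssw _ _ _ => [0]
  | scons _ f => map S (weight f)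
  end.

End SList.

Arguments sid {C}.
Arguments ssw {C}.

(** * The Coxeter group \overline{A_infty}: words in the generators s_i (i : nat)
    modulo the congruence generated by the Coxeter relations.  Since every
    generator is an involution, the monoid with this presentation is the
    group with this presentation. *)
Inductive cox_rel : list nat -> list nat -> Prop :=
| cox_sq : forall i, cox_rel [i; i] []
| cox_braid : forall i, cox_rel [i; S i; i; S i; i; S i] []
| cox_comm : forall i j, S i < j \/ S j < i -> cox_rel [i; j; i; j] [].

Inductive cox_eq : list nat -> list nat -> Prop :=
| cox_eq_rel : forall u v r r', cox_rel r r' -> cox_eq (u ++ r ++ v) (u ++ r' ++ v)
| cox_eq_refl : forall u, cox_eq u u
| cox_eq_sym : forall u v, cox_eq u v -> cox_eq v u
| cox_eq_trans : forall u v w, cox_eq u v -> cox_eq v w -> cox_eq u w.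

From Stdlib Require Import List Arith Lia Setoid Morphisms Eqdep.
Import ListNotations.

(* The Coxeter group acts on nat, s_i exchanging i and i+1, and the image of a
   morphism under the weight acts as the permutation of positions that the
   morphism performs; so the weight is sound for the relations and equal
   weights give equal permutations.  Conversely, every morphism equals the
   composite of the adjacent swaps listed by its weight, and a normal form
   (each head element in turn is sunk to its final position, as in a Lehmer
   code) followed by an adjacent swap is again equal to a normal form, by
   naturality, involutivity and Yang--Baxter.  Hence every morphism has a
   normal form, and normal forms are determined by their permutation. *)

Definition transp (i n : nat) : nat :=
  if n =? i then S i else if n =? S i then i else n.

Fixpoint word_perm (w : list nat) (n : nat) : nat :=
  match w with [] => n | i :: w => word_perm w (transp i n) end.

Lemma transp_cases i n :
  (n = i /\ transp i n = S i) \/ (n = S i /\ transp i n = i) \/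
  (n <> i /\ n <> S i /\ transp i n = n).
Proof.
  unfold transp; destruct (Nat.eqb_spec n i); [now left|].
  destruct (Nat.eqb_spec n (S i)); [now right; left | now right; right].
Qed.

Lemma transp_S i n : transp (S i) (S n) = S (transp i n).
Proof. unfold transp; simpl; destruct (n =? i), (n =? S i); reflexivity. Qed.

Lemma word_perm_app u v n : word_perm (u ++ v) n = word_perm v (word_perm u n).
Proof. revert n; induction u; simpl; auto. Qed.

Lemma word_perm_map_S w n :
  word_perm (map S w) n = match n with 0 => 0 | S n => S (word_perm w n) end.
Proof.
  revert n; induction w as [|i w IH]; intros [|n]; simpl; auto.
  - exact (IH 0).
  - now rewrite transp_S, IH.
Qed.

Lemma word_perm_cox_rel r r' : cox_rel r r' -> forall n, word_perm r n = word_perm r' n.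
Proof.
  destruct 1; intro n; simpl;
  repeat match goal with
  | |- context [transp ?i ?m] =>
      lazymatch m with context [transp _ _] => fail | _ =>
        destruct (transp_cases i m) as [[? ->] | [[? ->] | [? [? ->]]]]; try lia end
  end.
Qed.

Lemma word_perm_cox_eq u v : cox_eq u v -> forall n, word_perm u n = word_perm v n.
Proof.
  induction 1; intro n; try congruence.
  now rewrite !word_perm_app, (word_perm_cox_rel _ _ H).
Qed.

#[export] Instance cox_eq_Equivalence : Equivalence cox_eq.
Proof. split; [exact cox_eq_refl | exact cox_eq_sym | exact cox_eq_trans]. Qed.

Lemma cox_eq_ctx p s u v : cox_eq u v -> cox_eq (p ++ u ++ s) (p ++ v ++ s).
Proof.
  induction 1 as [u v r r' Hr| | |]; try (now constructor); [|etransitivity; eauto].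
  assert (E : forall t, p ++ (u ++ t ++ v) ++ s = (p ++ u) ++ t ++ (v ++ s))
    by (intro; now rewrite !app_assoc).
  rewrite !E; now apply cox_eq_rel.
Qed.

#[export] Instance app_cox_eq_Proper : Proper (cox_eq ==> cox_eq ==> cox_eq) (@app nat).
Proof.
  intros u u' Hu v v' Hv; transitivity (u' ++ v).
  - exact (cox_eq_ctx [] v _ _ Hu).
  - rewrite <- (app_nil_r v), <- (app_nil_r v'). exact (cox_eq_ctx u' [] _ _ Hv).
Qed.

Lemma cox_eq_map_S u v : cox_eq u v -> cox_eq (map S u) (map S v).
Proof.
  induction 1 as [u v r r' Hr| | |]; try (now constructor); [|etransitivity; eauto].
  rewrite !map_app; apply cox_eq_rel.
  destruct Hr; simpl; constructor; lia.
Qed.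

Lemma cox_eq_cancel u v i : cox_eq (u ++ i :: i :: v) (u ++ v).
Proof. exact (cox_eq_rel u v (cox_sq i)). Qed.

Lemma cox_eq_braid i : cox_eq [i; S i; i] [S i; i; S i].
Proof.
  symmetry.
  transitivity ([i; S i; i; S i; i; S i] ++ [S i; i; S i]).
  { symmetry. exact (cox_eq_rel [] [S i; i; S i] (cox_braid i)). }
  etransitivity; [exact (cox_eq_cancel [i; S i; i; S i; i] [i; S i] (S i))|].
  etransitivity; [exact (cox_eq_cancel [i; S i; i; S i] [S i] i)|].
  exact (cox_eq_cancel [i; S i; i] [] (S i)).
Qed.

Lemma cox_eq_commute i j : S i < j \/ S j < i -> cox_eq [i; j] [j; i].
Proof.
  intro Hij; symmetry.
  transitivity ([j; i] ++ [i; j; i; j] ++ []).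
  { symmetry. exact (cox_eq_rel [j; i] [] (cox_comm Hij)). }
  etransitivity; [exact (cox_eq_cancel [j] [j; i; j] i)|].
  exact (cox_eq_cancel [] [i; j] j).
Qed.

Lemma cox_eq_commute_word i w :
  Forall (fun j => S i < j \/ S j < i) w -> cox_eq (w ++ [i]) (i :: w).
Proof.
  induction 1 as [|j w Hj _ IH]; [reflexivity|].
  change (cox_eq ([j] ++ w ++ [i]) ([i; j] ++ w)).
  rewrite IH, (cox_eq_commute _ _ Hj); reflexivity.
Qed.

Lemma weight_sheq (C : Type) (l l' : list C) (f g : shom l l') :
  sheq f g -> cox_eq (weight f) (weight g).
Proof.
  induction 1; simpl; try reflexivity.
  - now symmetry.
  - etransitivity; eauto.
  - now rewrite IHsheq1, IHsheq2.
  - now apply cox_eq_map_S.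
  - now rewrite app_nil_r.
  - now rewrite app_assoc.
  - now rewrite map_app.
  - apply cox_eq_commute_word.
    apply Forall_map, Forall_map, Forall_forall; lia.
  - exact (cox_eq_cancel [] [] 0).
  - apply cox_eq_braid.
Qed.

Section Positions.
Context {C : Type}.

Fixpoint hom_perm {l l' : list C} (f : shom l l') : nat -> nat :=
  match f with
  | sid _ => fun n => n
  | scomp g h => fun n => hom_perm g (hom_perm h n)
  | ssw _ _ _ => transp 0
  | scons _ h => fun n => match n with 0 => 0 | S n => S (hom_perm h n) end
  end.

Lemma hom_perm_sheq (l l' : list C) (f g : shom l l') :
  sheq f g -> forall n, hom_perm f n = hom_perm g n.
Proof.
  induction 1; intro n; simpl; try congruence;
  try (destruct n as [|[|[|n]]]; reflexivity);
  try (destruct n; simpl; congruence).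
Qed.

Lemma word_perm_weight (l l' : list C) (f : shom l l') n :
  word_perm (weight f) n = hom_perm f n.
Proof.
  revert n; induction f; intro n; simpl; auto.
  - now rewrite word_perm_app, IHf2, IHf1.
  - rewrite word_perm_map_S; destruct n; auto.
Qed.

End Positions.

Section HetEq.
Context {C : Type}.

#[export] Instance sheq_Equivalence (l l' : list C) : Equivalence (@sheq C l l').
Proof. split; intro; [apply sheq_refl | apply sheq_sym | apply sheq_trans]. Qed.

#[export] Instance scomp_Proper (l1 l2 l3 : list C) :
  Proper (@sheq C l2 l3 ==> @sheq C l1 l2 ==> @sheq C l1 l3) (@scomp C l1 l2 l3).
Proof. intros g g' Hg f f' Hf; now apply sheq_comp. Qed.

#[export] Instance scons_Proper (x : C) (l l' : list C) :
  Proper (@sheq C l l' ==> @sheq C (x :: l) (x :: l')) (@scons C x l l').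
Proof. intros f f' Hf; now apply sheq_cons. Qed.

(* [sheq] across propositional equalities of the endpoints: normal forms land in
   lists such as [insert_at k x m], equal but not convertible to the codomain
   at hand. *)
Definition hsheq {L M L' M' : list C} (f : shom L M) (g : shom L' M') : Prop :=
  exists (eL : L = L') (eM : M = M'),
    sheq (eq_rect M (shom L') (eq_rect L (fun X => shom X M) f L' eL) M' eM) g.

Ltac destruct_hsheq H :=
  let eL := fresh "eL" in let eM := fresh "eM" in
  destruct H as [eL [eM H]]; subst;
  repeat match goal with e : ?a = ?a |- _ => rewrite (UIP_refl _ _ e) in H; clear e end;
  simpl in H.

Lemma hsheq_of_sheq {L M : list C} (f g : shom L M) : sheq f g -> hsheq f g.
Proof. intro H; now exists eq_refl, eq_refl. Qed.

Lemma sheq_of_hsheq {L M : list C} (f g : shom L M) : hsheq f g -> sheq f g.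
Proof. intro H; now destruct_hsheq H. Qed.

Lemma hsheq_refl {L M : list C} (f : shom L M) : hsheq f f.
Proof. now apply hsheq_of_sheq. Qed.

Lemma hsheq_sym {L M L' M' : list C} {f : shom L M} {g : shom L' M'} :
  hsheq f g -> hsheq g f.
Proof. intro H; destruct_hsheq H; now apply hsheq_of_sheq. Qed.

Lemma hsheq_trans {L M L' M' L'' M'' : list C}
  {f : shom L M} {g : shom L' M'} {h : shom L'' M''} :
  hsheq f g -> hsheq g h -> hsheq f h.
Proof.
  intros H H'; destruct_hsheq H; destruct_hsheq H'.
  apply hsheq_of_sheq; now transitivity g.
Qed.

#[export] Instance hsheq_Proper (L M L' M' : list C) :
  Proper (@sheq C L M ==> @sheq C L' M' ==> iff) (@hsheq L M L' M').
Proof.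
  intros f f' Hf g g' Hg; split; intro H.
  - apply (hsheq_trans (g := f)); [apply hsheq_of_sheq; now symmetry|].
    apply (hsheq_trans (g := g)); [exact H | now apply hsheq_of_sheq].
  - apply (hsheq_trans (g := f')); [now apply hsheq_of_sheq|].
    apply (hsheq_trans (g := g')); [exact H | apply hsheq_of_sheq; now symmetry].
Qed.

Lemma hsheq_comp {L M N L' M' N' : list C} {f : shom L M} {g : shom M N}
  {f' : shom L' M'} {g' : shom M' N'} :
  hsheq f f' -> hsheq g g' -> hsheq (scomp g f) (scomp g' f').
Proof.
  intros H H'; destruct_hsheq H; destruct_hsheq H'.
  apply hsheq_of_sheq; now rewrite H, H'.
Qed.

Lemma hsheq_comp_assoc {L M N P Q : list C} {f : shom L M} {g : shom M N}
  {h : shom N P} {k : shom M Q} :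
  hsheq (scomp h g) k -> hsheq (scomp h (scomp g f)) (scomp k f).
Proof.
  intro H; rewrite sheq_assoc; exact (hsheq_comp (hsheq_refl f) H).
Qed.

Lemma hsheq_cons (x : C) {L M L' M' : list C} {f : shom L M} {f' : shom L' M'} :
  hsheq f f' -> hsheq (scons x f) (scons x f').
Proof. intro H; destruct_hsheq H; apply hsheq_of_sheq; now rewrite H. Qed.

Lemma hsheq_cod {L M L' M' : list C} {f : shom L M} {g : shom L' M'} :
  hsheq f g -> M = M'.
Proof. now intros [_ [eM _]]. Qed.

Lemma hom_perm_hsheq {L M L' M' : list C} {f : shom L M} {g : shom L' M'} :
  hsheq f g -> forall n, hom_perm f n = hom_perm g n.
Proof. intro H; destruct_hsheq H; now apply hom_perm_sheq. Qed.

End HetEq.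

Section NormalForms.
Context {C : Type}.

(* When [l] has no entry at position [i+1], [sw_at i l] is the identity. *)
Fixpoint swap_at (i : nat) (l : list C) {struct l} : list C :=
  match l with
  | [] => []
  | a :: r =>
      match i with
      | 0 => match r with [] => [a] | b :: r' => b :: a :: r' end
      | S i => a :: swap_at i r
      end
  end.

Fixpoint sw_at (i : nat) (l : list C) {struct l} : shom l (swap_at i l) :=
  match l as l0 return shom l0 (swap_at i l0) with
  | [] => sid []
  | a :: r =>
      match i as i0 return shom (a :: r) (swap_at i0 (a :: r)) with
      | 0 => match r as r0 return shom (a :: r0) (swap_at 0 (a :: r0)) with
             | [] => sid [a]
             | b :: r' => ssw a b r'
             end
      | S i => scons a (sw_at i r)
      end
  end.

Lemma swap_at_length i (l : list C) : length (swap_at i l) = length l.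
Proof.
  revert i; induction l as [|a r IH]; intros [|i]; simpl; auto.
  destruct r; reflexivity.
Qed.

Fixpoint swap_word (w : list nat) (l : list C) : list C :=
  match w with [] => l | i :: w => swap_word w (swap_at i l) end.

Fixpoint sw_word (w : list nat) (l : list C) : shom l (swap_word w l) :=
  match w as w0 return shom l (swap_word w0 l) with
  | [] => sid l
  | i :: w => scomp (sw_word w (swap_at i l)) (sw_at i l)
  end.

Fixpoint insert_at (k : nat) (x : C) (m : list C) : list C :=
  match k, m with
  | S k, y :: r => y :: insert_at k x r
  | S _, [] => [x]
  | 0, _ => x :: m
  end.

Fixpoint sink (x : C) (k : nat) (m : list C) : shom (x :: m) (insert_at k x m) :=
  match k as k0 return shom (x :: m) (insert_at k0 x m) with
  | 0 => sid (x :: m)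
  | S k =>
      match m as m0 return shom (x :: m0) (insert_at (S k) x m0) with
      | [] => sid [x]
      | y :: r => scomp (scons y (sink x k r)) (ssw x y r)
      end
  end.

Lemma cons_sink_commute (x y : C) (r r' P Q Q' : list C) (s : shom P Q)
  (i : shom (x :: r) P) (i' : shom (x :: r') Q') (t : shom r r') :
  hsheq (scomp s i) (scomp i' (scons x t)) ->
  hsheq (scomp (scons y s) (scomp (scons y i) (ssw x y r)))
        (scomp (scomp (scons y i') (ssw x y r')) (scons x (scons y t))).
Proof.
  intro H.
  rewrite sheq_assoc, <- sheq_cons_comp, <- sheq_assoc, sheq_sw_nat, sheq_assoc,
    <- sheq_cons_comp.
  apply hsheq_comp; [apply hsheq_refl | now apply hsheq_cons].
Qed.

Lemma cons_sink_absorb (x y : C) (r P Q Q' : list C) (s : shom P Q)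
  (i : shom (x :: r) P) (i' : shom (x :: r) Q') :
  hsheq (scomp s i) i' ->
  hsheq (scomp (scons y s) (scomp (scons y i) (ssw x y r)))
        (scomp (scons y i') (ssw x y r)).
Proof.
  intro H; rewrite sheq_assoc, <- sheq_cons_comp.
  apply hsheq_comp; [apply hsheq_refl | now apply hsheq_cons].
Qed.

Lemma sw_at_sink_left (x : C) i k m : S i < k -> k <= length m ->
  hsheq (scomp (sw_at i (insert_at k x m)) (sink x k m))
        (scomp (sink x k (swap_at i m)) (scons x (sw_at i m))).
Proof.
  revert k m; induction i as [|i IH]; intros k m Hik Hkm.
  - destruct k as [|[|k]], m as [|y [|z r]]; simpl in *; try lia.
    apply hsheq_of_sheq.
    (* Yang--Baxter, after moving the swap of [y] and [z] past the sinking of [x] *)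
    rewrite !sheq_cons_comp, <- !sheq_assoc, (sheq_assoc (ssw y z (insert_at k x r))),
      sheq_sw_nat, <- !sheq_assoc, sheq_yb.
    reflexivity.
  - destruct k as [|k], m as [|y r]; simpl in *; try lia.
    apply cons_sink_commute, IH; lia.
Qed.

Lemma sw_at_sink_right (x : C) k m j : k <= j ->
  hsheq (scomp (sw_at (S j) (insert_at k x m)) (sink x k m))
        (scomp (sink x k (swap_at j m)) (scons x (sw_at j m))).
Proof.
  revert m j; induction k as [|k IH]; intros m j Hkj.
  - apply hsheq_of_sheq; simpl; now rewrite sheq_idr, sheq_idl.
  - destruct m as [|y r], j as [|j]; simpl; try lia.
    + apply hsheq_of_sheq; now rewrite sheq_idr, sheq_idl.
    + apply cons_sink_commute, IH; lia.
Qed.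

Lemma sw_at_sink_forward (x : C) k m : k < length m ->
  hsheq (scomp (sw_at k (insert_at k x m)) (sink x k m)) (sink x (S k) m).
Proof.
  revert m; induction k as [|k IH]; intros [|y r] Hk; simpl in *; try lia.
  - apply hsheq_of_sheq; now rewrite sheq_idr, sheq_cons_id, sheq_idl.
  - apply cons_sink_absorb, IH; lia.
Qed.

Lemma sw_at_sink_end (x : C) m :
  hsheq (scomp (sw_at (length m) (insert_at (length m) x m)) (sink x (length m) m))
        (sink x (length m) m).
Proof.
  induction m as [|y r IH]; simpl.
  - apply hsheq_of_sheq; now rewrite sheq_idr.
  - now apply cons_sink_absorb.
Qed.

Lemma sw_at_sink_backward (x : C) i m : S i <= length m ->
  hsheq (scomp (sw_at i (insert_at (S i) x m)) (sink x (S i) m)) (sink x i m).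
Proof.
  revert m; induction i as [|i IH]; intros [|y r] Hi; simpl in *; try lia.
  - apply hsheq_of_sheq; now rewrite sheq_cons_id, sheq_idl, sheq_sw_inv.
  - apply cons_sink_absorb, IH; lia.
Qed.

Inductive is_nf : forall {L M : list C}, shom L M -> Prop :=
| nf_nil : is_nf (sid [])
| nf_cons x l m k (N : shom l m) : k <= length m -> is_nf N ->
    is_nf (scomp (sink x k m) (scons x N)).

Definition has_nf {L M : list C} (f : shom L M) : Prop :=
  exists M' (N : shom L M'), is_nf N /\ hsheq f N.

Lemma has_nf_sink_absorb x l m k k' (N : shom l m) (P : list C)
  (s : shom (insert_at k x m) P) :
  k' <= length m -> is_nf N -> hsheq (scomp s (sink x k m)) (sink x k' m) ->
  has_nf (scomp s (scomp (sink x k m) (scons x N))).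
Proof.
  intros Hk' HN H.
  exists (insert_at k' x m), (scomp (sink x k' m) (scons x N)).
  split; [now constructor | now apply hsheq_comp_assoc].
Qed.

Lemma has_nf_sink_commute x l m m' k (N : shom l m) (t : shom m m') (P : list C)
  (s : shom (insert_at k x m) P) :
  k <= length m' -> has_nf (scomp t N) ->
  hsheq (scomp s (sink x k m)) (scomp (sink x k m') (scons x t)) ->
  has_nf (scomp s (scomp (sink x k m) (scons x N))).
Proof.
  intros Hk [M1 [N1 [HN1 H1]]] H.
  pose proof (hsheq_cod H1) as <-.
  exists (insert_at k x m'), (scomp (sink x k m') (scons x N1)).
  split; [now constructor|].
  apply hsheq_trans with (1 := hsheq_comp_assoc H).
  rewrite <- sheq_assoc, <- sheq_cons_comp.
  apply hsheq_comp; [now apply hsheq_cons | apply hsheq_refl].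
Qed.

Lemma has_nf_sw_at {L M : list C} {N : shom L M} i :
  is_nf N -> has_nf (scomp (sw_at i M) N).
Proof.
  intro HN; revert i; induction HN as [|x l m k N Hk HN IH]; intro i.
  - exists [], (sid []); split; [constructor|].
    apply hsheq_of_sheq; destruct i; apply sheq_idl.
  - destruct (lt_eq_lt_dec (S i) k) as [[Hlt | <-] | Hgt].
    + apply has_nf_sink_commute with (t := sw_at i m);
        [now rewrite swap_at_length | apply IH | now apply sw_at_sink_left].
    + apply has_nf_sink_absorb with (k' := i); auto; [lia|].
      now apply sw_at_sink_backward.
    + destruct (Nat.eq_dec i k) as [-> | Hne].
      * destruct (Nat.eq_dec k (length m)) as [-> | Hkm].
        -- apply has_nf_sink_absorb with (k' := length m); auto.
           apply sw_at_sink_end.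
        -- apply has_nf_sink_absorb with (k' := S k); [lia | auto |].
           apply sw_at_sink_forward; lia.
      * destruct i as [|j]; [lia|].
        apply has_nf_sink_commute with (t := sw_at j m);
          [now rewrite swap_at_length | apply IH | apply sw_at_sink_right; lia].
Qed.

Lemma has_nf_sw_word w {L M : list C} {N : shom L M} :
  is_nf N -> has_nf (scomp (sw_word w M) N).
Proof.
  revert M N; induction w as [|i w IH]; intros M N HN; simpl.
  - exists M, N; split; [exact HN | apply hsheq_of_sheq, sheq_idl].
  - destruct (has_nf_sw_at i HN) as [M1 [N1 [HN1 H1]]].
    pose proof (hsheq_cod H1) as <-.
    destruct (IH _ _ HN1) as [M2 [N2 [HN2 H2]]].
    exists M2, N2; split; [exact HN2|].
    rewrite <- sheq_assoc.
    exact (hsheq_trans (hsheq_comp H1 (hsheq_refl _)) H2).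
Qed.

Lemma sw_word_app u v (l : list C) :
  hsheq (sw_word (u ++ v) l) (scomp (sw_word v (swap_word u l)) (sw_word u l)).
Proof.
  revert l; induction u as [|i u IH]; intro l; simpl.
  - apply hsheq_of_sheq; now rewrite sheq_idr.
  - rewrite sheq_assoc; exact (hsheq_comp (hsheq_refl _) (IH _)).
Qed.

Lemma sw_word_map_S (x : C) w l :
  hsheq (sw_word (map S w) (x :: l)) (scons x (sw_word w l)).
Proof.
  revert l; induction w as [|i w IH]; intro l; simpl.
  - apply hsheq_of_sheq; now rewrite sheq_cons_id.
  - rewrite sheq_cons_comp; exact (hsheq_comp (hsheq_refl _) (IH _)).
Qed.

Lemma sw_word_dom w (l l' : list C) : l = l' -> hsheq (sw_word w l) (sw_word w l').
Proof. intros ->; apply hsheq_refl. Qed.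

Lemma hsheq_sw_word_weight {L M : list C} (f : shom L M) : hsheq f (sw_word (weight f) L).
Proof.
  induction f as [l|l1 l2 l3 g IHg f IHf|a b l|x l l' f IHf]; simpl.
  - apply hsheq_refl.
  - refine (hsheq_trans _ (hsheq_sym (sw_word_app _ _ _))).
    apply (hsheq_comp IHf), (hsheq_trans IHg), sw_word_dom, (hsheq_cod IHf).
  - apply hsheq_of_sheq; now rewrite sheq_idl.
  - exact (hsheq_trans (hsheq_cons x IHf) (hsheq_sym (sw_word_map_S x _ _))).
Qed.

Fixpoint nf_id (L : list C) : shom L L :=
  match L with [] => sid [] | x :: l => scomp (sink x 0 l) (scons x (nf_id l)) end.

Lemma is_nf_nf_id (L : list C) : is_nf (nf_id L).
Proof.
  induction L as [|x l IH]; [exact nf_nil|].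
  exact (nf_cons x l l 0 (nf_id l) (Nat.le_0_l _) IH).
Qed.

Lemma nf_id_sid (L : list C) : sheq (nf_id L) (sid L).
Proof. induction L; simpl; [reflexivity|]. now rewrite IHL, sheq_cons_id, sheq_idl. Qed.

Lemma has_nf_all {L M : list C} (f : shom L M) : has_nf f.
Proof.
  destruct (has_nf_sw_word (weight f) (is_nf_nf_id L)) as [M' [N [HN H]]].
  exists M', N; split; [exact HN|].
  rewrite nf_id_sid, sheq_idr in H.
  exact (hsheq_trans (hsheq_sw_word_weight f) H).
Qed.

Lemma hom_perm_sink_head (x : C) k m : k <= length m -> hom_perm (sink x k m) 0 = k.
Proof.
  revert m; induction k as [|k IH]; intros [|y r] Hk; simpl in *; try lia; auto.
  rewrite IH; auto; lia.
Qed.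

Lemma hom_perm_sink_tail (x : C) k m j : k <= length m ->
  hom_perm (sink x k m) (S j) = if j <? k then j else S j.
Proof.
  revert m j; induction k as [|k IH]; intros [|y r] j Hk; simpl in *; try lia; auto.
  destruct j as [|j]; simpl; auto.
  rewrite IH by lia; destruct (Nat.ltb_spec j k), (Nat.ltb_spec (S j) (S k)); lia.
Qed.

Lemma nf_unique (L M : list C) (N : shom L M) : is_nf N ->
  forall L' M' (N' : shom L' M'), is_nf N' -> L = L' ->
  (forall n, hom_perm N n = hom_perm N' n) -> hsheq N N'.
Proof.
  induction 1 as [|x l m k N Hk HN IH];
    destruct 1 as [|x' l' m' k' N' Hk' HN']; intros E P; try discriminate.
  - apply hsheq_refl.
  - injection E as <- <-.
    assert (k' = k) as ->.
    { specialize (P 0); simpl in P. now rewrite !hom_perm_sink_head in P. }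
    assert (HNN' : hsheq N N').
    { apply IH; auto. intro n; specialize (P (S n)); simpl in P.
      rewrite !hom_perm_sink_tail in P by auto.
      destruct (Nat.ltb_spec (hom_perm N n) k), (Nat.ltb_spec (hom_perm N' n) k); lia. }
    pose proof (hsheq_cod HNN') as <-.
    exact (hsheq_comp (hsheq_cons x HNN') (hsheq_refl _)).
Qed.

End NormalForms.

Theorem theorem2p8 (C : Type) (L L' : list C) (f g : shom L L') :
  sheq f g <-> cox_eq (weight f) (weight g).
Proof.
  split; [apply weight_sheq | intro Hw].
  destruct (has_nf_all f) as [M1 [N1 [HN1 Hf]]].
  destruct (has_nf_all g) as [M2 [N2 [HN2 Hg]]].
  apply sheq_of_hsheq.
  refine (hsheq_trans Hf (hsheq_trans _ (hsheq_sym Hg))).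
  apply nf_unique; auto; intro n.
  rewrite <- (hom_perm_hsheq Hf), <- (hom_perm_hsheq Hg), <- !word_perm_weight.
  now apply word_perm_cox_eq.
Qed.
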